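(* Let $\mathbb D=\{z\in\mathbb C:|z|<1\}$ and let $\mathcal P$ be the set of holomorphic functions $p$ on $\mathbb D$ with $\operatorname{Re} p(z)>0$ for all $z\in\mathbb D$ (no normalization $p(0)=1$ is imposed). For $p\in\mathcal P$ and $0<r<1$ set \[ I_p(r):=\int_0^{2\pi}\left|\frac{z p'(z)}{p(z)}\right|^2\,d\theta,\qquad z=re^{i\theta}. \] Let $\Phi:(0,1)\to(0,\infty)$ satisfy $\Phi(r)=o\bigl((1-r)^{-2}\bigr)$ as $r\to1^-$. Then there exists $p_\Phi\in\mathcal P$ such that \[ \limsup_{r\to1^-}\frac{I_{p_\Phi}(r)}{\Phi(r)}=+\infty, \] i.e. $I_{p_\Phi}(r)\neq O(\Phi(r))$ as $r\to1^-$. *)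

From Stdlib Require Import Reals.
From Coquelicot Require Import Coquelicot.
Open Scope R_scope.

Definition in_disc (z : C) : Prop := Cmod z < 1.

(* Complex derivative: is_derive over the absolute ring C, i.e.
   p(w) - p(z) = (w - z) * dp + o(w - z) with complex multiplication. *)
Definition C_is_derive (p : C -> C) (z dp : C) : Prop :=
  @is_derive C_AbsRing C_NormedModule p z dp.

Definition in_class_P_with_deriv (p dp : C -> C) : Prop :=
  (forall z, in_disc z -> C_is_derive p z (dp z)) /\
  (forall z, in_disc z -> 0 < Re (p z)).

Definition polar (r theta : R) : C := (r * cos theta, r * sin theta).

Definition I_p (p dp : C -> C) (r : R) : R :=
  RInt (fun theta => let z := polar r theta in
                     (Cmod (z * dp z / p z)) ^ 2) 0 (2 * PI).

(* The function is p = 1 + sum_k a_k z^(n_k) with a_k = 16^(-k)/4 and a rapidly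
   increasing sequence of exponents n_k, so that Re p >= 1 - sum_k a_k = 11/15 on the
   disc.  On the circle of radius r_m = 1 - 1/(4 n_(m+1)) the series of p' is dominated
   by its (m+1)-th term a_(m+1) n_(m+1) z^(n_(m+1) - 1), of modulus at least
   (3/4) a_(m+1) n_(m+1): the earlier terms are small because n_(m+1) is large compared
   with (m+1) n_m, and the later ones because the coefficients decay geometrically.
   Hence I_p(r_m) >= c (a_(m+1) n_(m+1))^2 = (c/16) a_(m+1)^2 (1 - r_m)^(-2).  Since
   Phi(r) = o((1-r)^(-2)), n_(m+1) can moreover be taken so large that
   Phi(r_m) <= eps_(m+1) (1 - r_m)^(-2) with eps_(m+1) a small multiple of
   a_(m+1)^2 / (m+2), and then I_p(r_m) / Phi(r_m) >= m + 2. *)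

From Stdlib Require Import Reals Lra Lia IndefiniteDescription.
From Coquelicot Require Import Coquelicot.
Open Scope R_scope.

(** * Complex series *)

(* The value is unspecified when u has no sum. *)
Definition Cseries (u : nat -> C) : C := @iota C_CompleteNormedModule (is_series u).

Lemma is_series_Cseries (u : nat -> C) : ex_series u -> is_series u (Cseries u).
Proof.
  intros [l Hl]. unfold Cseries.
  rewrite (iota_unique _ l); [exact Hl| |exact Hl].
  intros l' Hl'. exact (filterlim_locally_unique _ _ _ Hl' Hl).
Qed.

Lemma Cmod_sum_n_le (u : nat -> C) (b : nat -> R) n :
  (forall k, (k <= n)%nat -> Cmod (u k) <= b k) -> Cmod (sum_n u n) <= sum_n b n.
Proof.
  induction n as [|n IH]; intros Hb.
  - rewrite !sum_O. apply Hb. lia.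
  - rewrite !sum_Sn. eapply Rle_trans; [apply Cmod_triangle|].
    apply Rplus_le_compat; [apply IH; intros; apply Hb; lia|apply Hb; lia].
Qed.

Lemma Cmod_series_le (u : nat -> C) (b : nat -> R) l L :
  is_series u l -> is_series b L -> (forall k, Cmod (u k) <= b k) -> Cmod l <= L.
Proof.
  intros Hu Hb Hub.
  apply (is_lim_seq_le (fun n => Cmod (sum_n u n)) (sum_n b) (Cmod l) L).
  - intros n. apply Cmod_sum_n_le. intros k _. apply Hub.
  - apply (filterlim_comp _ _ _ _ Cmod _ (locally l) _ Hu).
    exact (filterlim_norm (K := C_AbsRing) (V := C_NormedModule) l).
  - exact Hb.
Qed.

(** * Estimates for powers *)

Lemma pow_le_one (s : R) k : 0 <= s <= 1 -> s ^ k <= 1.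
Proof. intros Hs. rewrite <- (pow1 k). apply pow_incr. lra. Qed.

Lemma pow_mul_bernoulli_le (s : R) k : 0 <= s <= 1 -> s ^ k * (1 + INR k * (1 - s)) <= 1.
Proof.
  intros Hs. induction k as [|k IH]; [simpl; lra|].
  rewrite S_INR. simpl.
  pose proof (pow_le s k (proj1 Hs)) as Hk0. pose proof (pow_le_one s k Hs) as Hk1.
  apply Rmult_le_compat_l with (r := s) in IH; [|lra].
  apply Rmult_le_compat_l with (r := 1 - s) in Hk1; [|lra].
  nra.
Qed.

Lemma bernoulli_le (s : R) k : 0 <= s <= 1 -> 1 - INR k * (1 - s) <= s ^ k.
Proof.
  intros Hs. induction k as [|k IH]; [simpl; lra|].
  rewrite S_INR. simpl.
  pose proof (pos_INR k).
  assert (s * (1 - INR k * (1 - s)) <= s * s ^ k) by (apply Rmult_le_compat_l; lra).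
  assert (0 <= INR k * ((1 - s) * (1 - s))) by (apply Rmult_le_pos; nra).
  nra.
Qed.

Lemma INR_mul_pow_le (s : R) k : 0 <= s < 1 -> INR k * s ^ k <= / (1 - s).
Proof.
  intros Hs. pose proof (pow_mul_bernoulli_le s k ltac:(lra)).
  pose proof (pow_le s k (proj1 Hs)). pose proof (pos_INR k).
  apply (Rmult_le_reg_r (1 - s)); [lra|]. rewrite Rinv_l by lra. nra.
Qed.

Lemma INR_sqr_mul_pow_le (s : R) k : 0 <= s < 1 -> INR k ^ 2 * (s ^ 2) ^ k <= / (1 - s) ^ 2.
Proof.
  intros Hs. rewrite <- pow_mult, Nat.mul_comm, pow_mult, <- Rpow_mult_distr, <- pow_inv.
  apply pow_incr. split; [|now apply INR_mul_pow_le].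
  apply Rmult_le_pos; [apply pos_INR|apply pow_le; lra].
Qed.

Lemma INR_mul_pow_pred (s : R) k : INR k * (s * s ^ pred k) = INR k * s ^ k.
Proof. destruct k; simpl; ring. Qed.

Lemma Cpow_sub_le (w z : C) (rho : R) k :
  Cmod w <= rho -> Cmod z <= rho ->
  rho * Cmod (w ^ k - z ^ k)%C <= INR k * rho ^ k * Cmod (w - z)%C.
Proof.
  intros Hw Hz. pose proof (Cmod_ge_0 w). pose proof (Cmod_ge_0 (w - z)%C).
  induction k as [|k IH].
  - replace (w ^ 0 - z ^ 0)%C with (RtoC 0) by (simpl; ring). rewrite Cmod_0. simpl. lra.
  - replace (w ^ S k - z ^ S k)%C with (w * (w ^ k - z ^ k) + (w - z) * z ^ k)%C
      by (rewrite !Cpow_S; ring).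
    pose proof (Cmod_triangle (w * (w ^ k - z ^ k)) ((w - z) * z ^ k)) as Htri.
    rewrite !Cmod_mult, Cmod_pow in Htri.
    pose proof (pow_incr (Cmod z) rho k (conj (Cmod_ge_0 z) Hz)).
    assert (rho * (Cmod w * Cmod (w ^ k - z ^ k)%C) <= rho * (INR k * rho ^ k * Cmod (w - z)%C)).
    { rewrite <- Rmult_assoc, (Rmult_comm rho), Rmult_assoc.
      apply Rmult_le_compat; try apply Rmult_le_pos; auto using Cmod_ge_0; lra. }
    assert (rho * (Cmod (w - z)%C * Cmod z ^ k) <= rho * (Cmod (w - z)%C * rho ^ k))
      by (apply Rmult_le_compat_l; [lra|]; apply Rmult_le_compat_l; lra).
    apply (Rmult_le_compat_l rho) in Htri; [|lra].
    rewrite S_INR. simpl. nra.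
Qed.

Lemma Cpow_taylor_step (w z : C) k :
  (w ^ S k - z ^ S k - INR (S k) * z ^ k * (w - z) =
   w * (w ^ k - z ^ k - INR k * z ^ pred k * (w - z))
   + INR k * z ^ pred k * ((w - z) * (w - z)))%C.
Proof. destruct k; simpl pred; rewrite ?S_INR, ?RtoC_plus, ?Cpow_S; simpl; ring. Qed.

(* Weighted by rho ^ 2 so that no exponent k - 2 appears. *)
Lemma Cpow_taylor_le (w z : C) (rho : R) k :
  Cmod w <= rho -> Cmod z <= rho ->
  rho ^ 2 * Cmod (w ^ k - z ^ k - INR k * z ^ pred k * (w - z))%C
  <= INR k ^ 2 * rho ^ k * Cmod (w - z)%C ^ 2.
Proof.
  intros Hw Hz. pose proof (Cmod_ge_0 w). pose proof (Cmod_ge_0 (w - z)%C).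
  induction k as [|k IH].
  - replace (w ^ 0 - z ^ 0 - INR 0 * z ^ pred 0 * (w - z))%C with (RtoC 0) by (simpl; ring).
    rewrite Cmod_0. simpl. lra.
  - simpl pred. rewrite Cpow_taylor_step.
    set (D := (w ^ k - z ^ k - INR k * z ^ pred k * (w - z))%C) in *.
    set (d := Cmod (w - z)%C) in *.
    pose proof (Cmod_triangle (w * D) (INR k * z ^ pred k * ((w - z) * (w - z)))) as Htri.
    rewrite !Cmod_mult, Cmod_pow, Cmod_R, Rabs_pos_eq in Htri by apply pos_INR.
    fold d in Htri.
    pose proof (pow_incr (Cmod z) rho (pred k) (conj (Cmod_ge_0 z) Hz)) as Hzk.
    pose proof (INR_mul_pow_pred rho k) as Hpred. pose proof (pos_INR k).
    pose proof (Cmod_ge_0 D). pose proof (pow_le rho k ltac:(lra)).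
    assert (Hhead : rho ^ 2 * (Cmod w * Cmod D) <= rho * (INR k ^ 2 * rho ^ k * d ^ 2)).
    { rewrite <- Rmult_assoc, (Rmult_comm (rho ^ 2)), Rmult_assoc.
      apply Rmult_le_compat; try apply Rmult_le_pos; auto using Cmod_ge_0, pow2_ge_0. }
    assert (Hlast : rho ^ 2 * (INR k * Cmod z ^ pred k * (d * d))
                    <= rho * (INR k * rho ^ k) * d ^ 2).
    { rewrite <- Hpred.
      assert (0 <= INR k * d ^ 2) by (apply Rmult_le_pos; [lra|apply pow2_ge_0]).
      assert (rho ^ 2 * Cmod z ^ pred k <= rho ^ 2 * rho ^ pred k)
        as Hr by (apply Rmult_le_compat_l; [apply pow2_ge_0|assumption]).
      apply Rmult_le_compat_l with (r := INR k * d ^ 2) in Hr; [|assumption].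
      simpl in *. nra. }
    apply (Rmult_le_compat_l (rho ^ 2)) in Htri; [|apply pow2_ge_0].
    assert (0 <= (INR k + 1) * rho ^ S k * d ^ 2).
    { apply Rmult_le_pos; [apply Rmult_le_pos; [lra|apply pow_le; lra]|apply pow2_ge_0]. }
    rewrite S_INR. simpl pow in *. nra.
Qed.

Lemma Cpow_taylor_le_sqr (w z : C) (s : R) k :
  0 < s < 1 -> Cmod w <= s ^ 2 -> Cmod z <= s ^ 2 ->
  Cmod (w ^ k - z ^ k - INR k * z ^ pred k * (w - z))%C
  <= Cmod (w - z)%C ^ 2 / ((1 - s) * s ^ 2) ^ 2.
Proof.
  intros Hs Hw Hz.
  pose proof (Cpow_taylor_le w z (s ^ 2) k Hw Hz) as Htaylor.
  pose proof (INR_sqr_mul_pow_le s k ltac:(lra)) as Hcoef.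
  assert (Hs2 : 0 < (s ^ 2) ^ 2) by (apply pow_lt, pow_lt; lra).
  apply (Rmult_le_reg_l ((s ^ 2) ^ 2)); [exact Hs2|].
  replace ((s ^ 2) ^ 2 * (Cmod (w - z)%C ^ 2 / ((1 - s) * s ^ 2) ^ 2))
    with (/ (1 - s) ^ 2 * Cmod (w - z)%C ^ 2) by (field; lra).
  eapply Rle_trans; [exact Htaylor|].
  apply Rmult_le_compat_r; [apply pow2_ge_0|exact Hcoef].
Qed.

Lemma Cpow_pred_sub_le_sqr (w z : C) (s : R) k :
  0 < s < 1 -> Cmod w <= s ^ 2 -> Cmod z <= s ^ 2 ->
  INR k * Cmod (w ^ pred k - z ^ pred k)%C <= Cmod (w - z)%C / ((1 - s) * s ^ 2) ^ 2.
Proof.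
  intros Hs Hw Hz. set (rho := s ^ 2) in *.
  pose proof (Cpow_sub_le w z rho (pred k) Hw Hz) as Hsub.
  pose proof (INR_sqr_mul_pow_le s k ltac:(lra)) as Hcoef. fold rho in Hcoef.
  pose proof (INR_mul_pow_pred rho k) as Hpred.
  assert (Hrho : 0 < rho) by (apply pow_lt; lra).
  assert (Hk : INR (pred k) <= INR k) by (apply le_INR; lia).
  pose proof (pos_INR (pred k)). pose proof (pow_le rho k ltac:(lra)).
  pose proof (Cmod_ge_0 (w - z)%C).
  apply (Rmult_le_reg_l (rho ^ 2)); [apply pow_lt; lra|].
  replace (rho ^ 2 * (Cmod (w - z)%C / ((1 - s) * rho) ^ 2))
    with (/ (1 - s) ^ 2 * Cmod (w - z)%C) by (field; lra).
  apply Rle_trans with (INR k * rho * (INR (pred k) * rho ^ pred k * Cmod (w - z)%C)).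
  { replace (rho ^ 2 * (INR k * Cmod (w ^ pred k - z ^ pred k)%C))
      with (INR k * rho * (rho * Cmod (w ^ pred k - z ^ pred k)%C)) by ring.
    apply Rmult_le_compat_l; [apply Rmult_le_pos; [apply pos_INR|lra]|exact Hsub]. }
  apply Rle_trans with (INR k ^ 2 * rho ^ k * Cmod (w - z)%C).
  { replace (INR k * rho * (INR (pred k) * rho ^ pred k * Cmod (w - z)%C))
      with (INR (pred k) * (INR k * (rho * rho ^ pred k)) * Cmod (w - z)%C) by ring.
    rewrite Hpred. apply Rmult_le_compat_r; [lra|].
    assert (0 <= INR k * rho ^ k) by (apply Rmult_le_pos; [apply pos_INR|lra]).
    simpl. nra. }
  apply Rmult_le_compat_r; [lra|exact Hcoef].
Qed.

Lemma C_is_derive_of_taylor_bound (f : C -> C) (z l : C) (delta K : R) :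
  0 < delta ->
  (forall w, Cmod (w - z)%C < delta ->
     Cmod (f w - f z - (w - z) * l)%C <= K * Cmod (w - z)%C ^ 2) ->
  C_is_derive f z l.
Proof.
  intros Hdelta Hf. split; [apply is_linear_scal_l|].
  intros x Hx.
  assert (z = x) as <-
    by exact (is_filter_lim_locally_unique
                (K := C_AbsRing) (V := AbsRing_NormedModule C_AbsRing) _ _ Hx).
  intros eps.
  apply (locally_le_locally_norm (K := C_AbsRing) (V := AbsRing_NormedModule C_AbsRing) z).
  assert (Hr : 0 < Rmin delta (eps / (Rabs K + 1))).
  { apply Rmin_pos; [lra|]. apply Rdiv_lt_0_compat; [apply cond_pos|pose proof (Rabs_pos K); lra]. }
  exists (mkposreal _ Hr). intros w Hw.
  change (Cmod (w - z)%C < Rmin delta (eps / (Rabs K + 1))) in Hw.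
  change (Cmod (f w - f z - (w - z) * l)%C <= eps * Cmod (w - z)%C).
  pose proof (Cmod_ge_0 (w - z)%C). set (d := Cmod (w - z)%C) in *.
  pose proof (Rabs_pos K). pose proof (Rle_abs K).
  assert (Hd : d * (Rabs K + 1) <= eps).
  { apply Rlt_le, Rlt_div_r; [lra|]. eapply Rlt_le_trans; [exact Hw|apply Rmin_r]. }
  eapply Rle_trans; [apply Hf; eapply Rlt_le_trans; [exact Hw|apply Rmin_l]|].
  assert (d * (d * (Rabs K + 1)) <= d * eps) by (apply Rmult_le_compat_l; lra).
  assert (K * d ^ 2 <= Rabs K * d ^ 2) by (apply Rmult_le_compat_r; [apply pow2_ge_0|lra]).
  change (K * d ^ 2 <= eps * d). simpl in *. nra.
Qed.

Lemma C_continuous_of_lipschitz_bound (f : C -> C) (z : C) (delta K : R) :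
  0 < delta ->
  (forall w, Cmod (w - z)%C < delta -> Cmod (f w - f z)%C <= K * Cmod (w - z)%C) ->
  filterlim f (locally z) (locally (f z)).
Proof.
  intros Hdelta Hf.
  apply (filterlim_locally_ball_norm (K := C_AbsRing) (U := C_NormedModule)).
  intros eps. apply (locally_le_locally_norm (K := C_AbsRing) (V := C_NormedModule) z).
  assert (Hr : 0 < Rmin delta (eps / (Rabs K + 1))).
  { apply Rmin_pos; [lra|]. apply Rdiv_lt_0_compat; [apply cond_pos|pose proof (Rabs_pos K); lra]. }
  exists (mkposreal _ Hr). intros w Hw.
  change (Cmod (w - z)%C < Rmin delta (eps / (Rabs K + 1))) in Hw.
  change (Cmod (f w - f z)%C < eps).
  pose proof (Cmod_ge_0 (w - z)%C). set (d := Cmod (w - z)%C) in *.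
  pose proof (Rabs_pos K). pose proof (Rle_abs K).
  assert (Hd : d * (Rabs K + 1) < eps).
  { apply Rlt_div_r; [lra|]. eapply Rlt_le_trans; [exact Hw|apply Rmin_r]. }
  eapply Rle_lt_trans; [apply Hf; eapply Rlt_le_trans; [exact Hw|apply Rmin_l]|].
  change (K * d < eps).
  assert (K * d <= Rabs K * d) by (apply Rmult_le_compat_r; lra).
  nra.
Qed.

Lemma C_is_derive_continuous (f : C -> C) (z l : C) :
  C_is_derive f z l -> filterlim f (locally z) (locally (f z)).
Proof.
  intros Hf P HP. apply locally_C.
  exact (ex_derive_continuous (K := C_AbsRing) (V := C_NormedModule) f z (ex_intro _ l Hf) P HP).
Qed.

Lemma disc_sqr_radius (z : C) : Cmod z < 1 -> exists s, 0 < s < 1 /\ Cmod z < s ^ 2.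
Proof.
  intros Hz. pose proof (Cmod_ge_0 z).
  exists ((1 + Cmod z) / 2). split; [lra|nra].
Qed.

Lemma Cmod_le_of_dist_lt (w z : C) (rho : R) : Cmod (w - z)%C < rho - Cmod z -> Cmod w <= rho.
Proof.
  intros Hwz. replace w with ((w - z) + z)%C by ring.
  pose proof (Cmod_triangle (w - z) z). lra.
Qed.

(** * Lacunary power series *)

Section LacunarySeries.

Variable a : nat -> R.
Variable n : nat -> nat.
Hypothesis a_ge0 : forall k, 0 <= a k.
Hypothesis a_summable : ex_series a.

Definition lac_term (z : C) (k : nat) : C := (a k * z ^ n k)%C.
Definition lac_deriv_term (z : C) (k : nat) : C := (a k * INR (n k) * z ^ pred (n k))%C.
Definition lac_sum (z : C) : C := Cseries (lac_term z).
Definition lac_deriv (z : C) : C := Cseries (lac_deriv_term z).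

Lemma Cmod_lac_term_le (z : C) k : Cmod z <= 1 -> Cmod (lac_term z k) <= a k.
Proof.
  intros Hz. unfold lac_term. rewrite Cmod_mult, Cmod_R, Rabs_pos_eq, Cmod_pow by apply a_ge0.
  pose proof (pow_le_one (Cmod z) (n k) (conj (Cmod_ge_0 z) Hz)).
  pose proof (pow_le (Cmod z) (n k) (Cmod_ge_0 z)). pose proof (a_ge0 k). nra.
Qed.

Lemma is_series_lac_sum (z : C) : Cmod z <= 1 -> is_series (lac_term z) (lac_sum z).
Proof.
  intros Hz. apply is_series_Cseries, (ex_series_le (V := C_CompleteNormedModule) _ a);
    [|exact a_summable].
  intros k. now apply Cmod_lac_term_le.
Qed.

Lemma Cmod_lac_sum_le (z : C) : Cmod z <= 1 -> Cmod (lac_sum z) <= Series a.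
Proof.
  intros Hz. apply (Cmod_series_le _ _ _ _ (is_series_lac_sum z Hz) (Series_correct _ a_summable)).
  intros k. now apply Cmod_lac_term_le.
Qed.

Lemma Cmod_lac_deriv_term_le (z : C) k (rho : R) :
  0 < rho < 1 -> Cmod z <= rho -> Cmod (lac_deriv_term z k) <= a k / (rho * (1 - rho)).
Proof.
  intros Hrho Hz. unfold lac_deriv_term.
  rewrite !Cmod_mult, !Cmod_R, !Rabs_pos_eq, Cmod_pow by (apply a_ge0 || apply pos_INR).
  pose proof (pow_incr _ _ (pred (n k)) (conj (Cmod_ge_0 z) Hz)).
  pose proof (INR_mul_pow_le rho (n k) ltac:(lra)).
  pose proof (INR_mul_pow_pred rho (n k)).
  pose proof (a_ge0 k). pose proof (pos_INR (n k)).
  assert (INR (n k) * rho ^ pred (n k) <= / (rho * (1 - rho))).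
  { apply (Rmult_le_reg_l rho); [lra|].
    replace (rho * / (rho * (1 - rho))) with (/ (1 - rho)) by (field; lra). lra. }
  assert (INR (n k) * Cmod z ^ pred (n k) <= INR (n k) * rho ^ pred (n k))
    by (apply Rmult_le_compat_l; lra).
  unfold Rdiv. rewrite Rmult_assoc. apply Rmult_le_compat_l; lra.
Qed.

Lemma is_series_lac_deriv (z : C) : Cmod z < 1 -> is_series (lac_deriv_term z) (lac_deriv z).
Proof.
  intros Hz. pose proof (Cmod_ge_0 z). set (rho := (1 + Cmod z) / 2).
  apply is_series_Cseries,
    (ex_series_le (V := C_CompleteNormedModule) _ (fun k => a k / (rho * (1 - rho)))).
  - intros k. apply Cmod_lac_deriv_term_le; unfold rho; lra.
  - apply ex_series_scal_r, a_summable.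
Qed.

Lemma lac_sum_is_derive (z : C) : Cmod z < 1 -> C_is_derive lac_sum z (lac_deriv z).
Proof.
  intros Hz. destruct (disc_sqr_radius z Hz) as [s [Hs Hzs]].
  apply (C_is_derive_of_taylor_bound _ _ _ (s ^ 2 - Cmod z) (Series a / ((1 - s) * s ^ 2) ^ 2));
    [lra|].
  intros w Hw. pose proof (Cmod_le_of_dist_lt w z _ Hw) as Hws.
  assert (Hs2 : s ^ 2 < 1) by nra.
  assert (Hdiff : is_series
            (fun k => (a k * (w ^ n k - z ^ n k - INR (n k) * z ^ pred (n k) * (w - z)))%C)
            (lac_sum w - lac_sum z - (w - z) * lac_deriv z)%C).
  { assert (Hterm : forall k, (lac_term w k - lac_term z k - (w - z) * lac_deriv_term z k)%C
                             = (a k * (w ^ n k - z ^ n k - INR (n k) * z ^ pred (n k) * (w - z)))%C)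
      by (intros k; unfold lac_term, lac_deriv_term; ring).
    eapply is_series_ext; [exact Hterm|].
    apply (is_series_minus (V := C_NormedModule)).
    - apply (is_series_minus (V := C_NormedModule)); apply is_series_lac_sum; lra.
    - apply (is_series_scal (V := C_NormedModule)), is_series_lac_deriv, Hz. }
  replace (Series a / ((1 - s) * s ^ 2) ^ 2 * Cmod (w - z)%C ^ 2)
    with (Series a * (Cmod (w - z)%C ^ 2 / ((1 - s) * s ^ 2) ^ 2)) by (field; lra).
  apply (Cmod_series_le _ _ _ _ Hdiff (is_series_scal_r _ _ _ (Series_correct _ a_summable))).
  intros k. rewrite Cmod_mult, Cmod_R, Rabs_pos_eq by apply a_ge0.
  apply Rmult_le_compat_l; [apply a_ge0|]. apply Cpow_taylor_le_sqr; lra.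
Qed.

Lemma lac_deriv_continuous (z : C) :
  Cmod z < 1 -> filterlim lac_deriv (locally z) (locally (lac_deriv z)).
Proof.
  intros Hz. destruct (disc_sqr_radius z Hz) as [s [Hs Hzs]].
  apply (C_continuous_of_lipschitz_bound _ _ (s ^ 2 - Cmod z) (Series a / ((1 - s) * s ^ 2) ^ 2));
    [lra|].
  intros w Hw. pose proof (Cmod_le_of_dist_lt w z _ Hw) as Hws.
  assert (Hs2 : s ^ 2 < 1) by nra.
  assert (Hdiff : is_series (fun k => (a k * (INR (n k) * (w ^ pred (n k) - z ^ pred (n k))))%C)
                    (lac_deriv w - lac_deriv z)%C).
  { assert (Hterm : forall k, (lac_deriv_term w k - lac_deriv_term z k)%C
                             = (a k * (INR (n k) * (w ^ pred (n k) - z ^ pred (n k))))%C)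
      by (intros k; unfold lac_deriv_term; ring).
    eapply is_series_ext; [exact Hterm|].
    apply (is_series_minus (V := C_NormedModule)); apply is_series_lac_deriv; lra. }
  replace (Series a / ((1 - s) * s ^ 2) ^ 2 * Cmod (w - z)%C)
    with (Series a * (Cmod (w - z)%C / ((1 - s) * s ^ 2) ^ 2)) by (field; lra).
  apply (Cmod_series_le _ _ _ _ Hdiff (is_series_scal_r _ _ _ (Series_correct _ a_summable))).
  intros k. rewrite !Cmod_mult, !Cmod_R, !Rabs_pos_eq by (apply a_ge0 || apply pos_INR).
  apply Rmult_le_compat_l; [apply a_ge0|]. apply Cpow_pred_sub_le_sqr; lra.
Qed.

End LacunarySeries.

(** * The integral I_p on a circle *)

Lemma Cmod_polar (r t : R) : 0 <= r -> Cmod (polar r t) = r.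
Proof.
  intros Hr. unfold Cmod, polar. simpl.
  replace (r * cos t * (r * cos t * 1) + r * sin t * (r * sin t * 1))
    with (r * r * (Rsqr (sin t) + Rsqr (cos t))) by (unfold Rsqr; ring).
  rewrite sin2_cos2, Rmult_1_r. now apply sqrt_square.
Qed.

Lemma polar_continuous (r t : R) : continuous (polar r) t.
Proof.
  intros P [eps HP].
  assert (Hcos : continuous (fun x => r * cos x) t)
    by (apply (continuous_mult (K := R_AbsRing)); [apply continuous_const|apply continuous_cos]).
  assert (Hsin : continuous (fun x => r * sin x) t)
    by (apply (continuous_mult (K := R_AbsRing)); [apply continuous_const|apply continuous_sin]).
  pose proof (proj1 (filterlim_locally _ _) Hcos eps) as Lcos.
  pose proof (proj1 (filterlim_locally _ _) Hsin eps) as Lsin.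
  apply (filter_imp _ _ (fun x Hx => HP _ Hx)). exact (filter_and _ _ Lcos Lsin).
Qed.

Lemma continuous_Cmod_comp_polar (f : C -> C) (r t : R) :
  filterlim f (locally (polar r t)) (locally (f (polar r t))) ->
  continuous (fun t => Cmod (f (polar r t))) t.
Proof.
  intros Hf.
  apply (continuous_comp (V := C_UniformSpace) (polar r) (fun z => Cmod (f z)));
    [apply polar_continuous|].
  apply (continuous_comp (V := C_UniformSpace) f Cmod); [exact Hf|].
  exact (filterlim_norm (K := C_AbsRing) (V := C_NormedModule) _).
Qed.

Lemma I_p_ge (p dp : C -> C) (r c : R) :
  0 <= r -> 0 <= c ->
  (forall t, p (polar r t) <> 0%C) ->
  (forall t, filterlim p (locally (polar r t)) (locally (p (polar r t)))) ->
  (forall t, filterlim dp (locally (polar r t)) (locally (dp (polar r t)))) ->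
  (forall t, c <= r * Cmod (dp (polar r t)) / Cmod (p (polar r t))) ->
  2 * PI * c ^ 2 <= I_p p dp r.
Proof.
  intros Hr Hc Hp0 Hp Hdp Hlow.
  set (g := fun t => r * Cmod (dp (polar r t)) / Cmod (p (polar r t))).
  assert (HI : I_p p dp r = RInt (fun t => g t * g t) 0 (2 * PI)).
  { apply RInt_ext. intros t _. unfold g.
    rewrite Cmod_div, Cmod_mult, Cmod_polar by auto. simpl. ring. }
  assert (Hg : forall t, continuous g t).
  { intros t. apply (continuous_mult (K := R_AbsRing)).
    - apply (continuous_mult (K := R_AbsRing)); [apply continuous_const|].
      now apply continuous_Cmod_comp_polar.
    - apply continuous_Rinv_comp; [now apply continuous_Cmod_comp_polar|].
      intros Hmod. now apply (Hp0 t), Cmod_eq_0. }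
  pose proof PI_RGT_0.
  rewrite HI. replace (2 * PI * c ^ 2) with (RInt (fun _ => c ^ 2) 0 (2 * PI)).
  2: { rewrite RInt_const. simpl. unfold scal; simpl. unfold mult; simpl. ring. }
  apply RInt_le; [lra|apply ex_RInt_const| |].
  - apply (ex_RInt_continuous (V := R_CompleteNormedModule)). intros t _.
    apply (continuous_mult (K := R_AbsRing)); apply Hg.
  - intros t _. assert (c <= g t) by apply Hlow. simpl. nra.
Qed.

(** * The function p and the lower bound for I_p *)

Definition coef (k : nat) : R := / 4 * (/ 16) ^ k.

Lemma coef_gt0 k : 0 < coef k.
Proof. unfold coef. apply Rmult_lt_0_compat; [lra|apply pow_lt; lra]. Qed.

Lemma coef_le k : coef k <= / 4.
Proof.
  unfold coef. pose proof (pow_le_one (/ 16) k ltac:(lra)).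
  pose proof (pow_le (/ 16) k ltac:(lra)). lra.
Qed.

Lemma coef_S k : coef (S k) = coef k / 16.
Proof. unfold coef. simpl. field. Qed.

Lemma is_series_coef_shift k : is_series (fun i => coef (k + i)) (coef k * (16 / 15)).
Proof.
  replace (coef k * (16 / 15)) with (coef k * / (1 - / 16)) by field.
  assert (Hterm : forall i, coef k * (/ 16) ^ i = coef (k + i))
    by (intros i; unfold coef; rewrite pow_add; ring).
  eapply is_series_ext; [exact Hterm|].
  apply (is_series_scal (V := R_NormedModule)), is_series_geom. rewrite Rabs_pos_eq; lra.
Qed.

Lemma coef_summable : ex_series coef.
Proof. exists (coef 0 * (16 / 15)). exact (is_series_coef_shift 0). Qed.

Lemma Series_coef : Series coef = 4 / 15.
Proof.
  apply is_series_unique. replace (4 / 15) with (coef 0 * (16 / 15)) by (unfold coef; simpl; field).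
  exact (is_series_coef_shift 0).
Qed.

Definition p_lac (n : nat -> nat) (z : C) : C := (1 + lac_sum coef n z)%C.

Lemma p_lac_is_derive n (z : C) : Cmod z < 1 -> C_is_derive (p_lac n) z (lac_deriv coef n z).
Proof.
  intros Hz. rewrite <- (plus_zero_l (lac_deriv coef n z)).
  apply (is_derive_plus (K := C_AbsRing) (V := C_NormedModule) (fun _ => RtoC 1)).
  - apply (is_derive_const (K := C_AbsRing) (V := C_NormedModule)).
  - apply lac_sum_is_derive; [intros k; apply Rlt_le, coef_gt0|exact coef_summable|exact Hz].
Qed.

Lemma Cmod_lac_sum_coef_le n (z : C) : Cmod z <= 1 -> Cmod (lac_sum coef n z) <= 4 / 15.
Proof.
  intros Hz. rewrite <- Series_coef.
  apply Cmod_lac_sum_le; [intros k; apply Rlt_le, coef_gt0|exact coef_summable|exact Hz].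
Qed.

Lemma Cmod_p_lac_le n (z : C) : Cmod z <= 1 -> Cmod (p_lac n z) <= 19 / 15.
Proof.
  intros Hz. pose proof (Cmod_lac_sum_coef_le n z Hz).
  eapply Rle_trans; [apply Cmod_triangle|]. rewrite Cmod_1. lra.
Qed.

Lemma Re_p_lac_ge n (z : C) : Cmod z <= 1 -> 11 / 15 <= Re (p_lac n z).
Proof.
  intros Hz. pose proof (Cmod_lac_sum_coef_le n z Hz).
  pose proof (proj1 (Rabs_le_between _ _) (re_le_Cmod (lac_sum coef n z))).
  unfold p_lac, Re in *. change (11 / 15 <= 1 + fst (lac_sum coef n z)). lra.
Qed.

Lemma p_lac_neq0 n (z : C) : Cmod z <= 1 -> p_lac n z <> 0%C.
Proof.
  intros Hz H0. pose proof (Re_p_lac_ge n z Hz) as HRe. rewrite H0 in HRe. simpl in HRe. lra.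
Qed.

Lemma p_lac_in_class_P n : in_class_P_with_deriv (p_lac n) (lac_deriv coef n).
Proof.
  split; intros z Hz.
  - now apply p_lac_is_derive.
  - pose proof (Re_p_lac_ge n z ltac:(unfold in_disc in Hz; lra)). lra.
Qed.

Lemma one_sub_inv4_bounds (N : R) : 1 <= N -> 3 / 4 <= 1 - / (4 * N) < 1.
Proof.
  intros HN. assert (/ (4 * N) <= / 4) by (apply Rinv_le_contravar; lra).
  pose proof (Rinv_0_lt_compat (4 * N) ltac:(lra)). lra.
Qed.

(* For nondecreasing exponents, the first m+1 terms of the series of p' then sum to at
   most coef (m+1) * n_(m+1) / 6 on the closed disc. *)
Definition lacunary_gap (n : nat -> nat) (m : nat) : Prop :=
  6 * INR (S m) * INR (n m) <= coef (S m) * INR (n (S m)).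

Lemma Cmod_lac_deriv_head_le n m (z : C) :
  Cmod z <= 1 -> (forall j, (j <= m)%nat -> (n j <= n m)%nat) ->
  Cmod (sum_n (lac_deriv_term coef n z) m) <= INR (S m) * INR (n m).
Proof.
  intros Hz Hmono. rewrite <- sum_n_const. apply Cmod_sum_n_le. intros j Hj.
  unfold lac_deriv_term. rewrite !Cmod_mult, !Cmod_R, !Rabs_pos_eq, Cmod_pow
    by (apply Rlt_le, coef_gt0 || apply pos_INR).
  pose proof (pow_le_one (Cmod z) (pred (n j)) (conj (Cmod_ge_0 z) Hz)).
  pose proof (pow_le (Cmod z) (pred (n j)) (Cmod_ge_0 z)).
  pose proof (coef_le j). pose proof (coef_gt0 j). pose proof (pos_INR (n j)).
  pose proof (le_INR _ _ (Hmono j Hj)).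
  assert (coef j * INR (n j) <= INR (n j)) by nra.
  assert (0 <= coef j * INR (n j)) by nra.
  nra.
Qed.

Lemma Cmod_lac_deriv_peak_ge n k (z : C) :
  1 <= INR (n k) -> Cmod z = 1 - / (4 * INR (n k)) ->
  3 / 4 * (coef k * INR (n k)) <= Cmod (lac_deriv_term coef n z k).
Proof.
  intros HN Hz. pose proof (one_sub_inv4_bounds _ HN) as Hr. rewrite <- Hz in Hr.
  set (r := Cmod z) in *.
  assert (Hpow : 3 / 4 <= r ^ n k).
  { pose proof (bernoulli_le r (n k) ltac:(lra)) as Hb.
    replace (INR (n k) * (1 - r)) with (/ 4) in Hb by (rewrite Hz; field; lra). lra. }
  assert (r ^ n k <= r ^ pred (n k)).
  { assert (Hpos : (0 < n k)%nat) by (apply INR_lt; simpl; lra).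
    replace (r ^ n k) with (r * r ^ pred (n k)) by (destruct (n k); [lia|reflexivity]).
    pose proof (pow_le r (pred (n k)) ltac:(lra)). nra. }
  unfold lac_deriv_term. rewrite !Cmod_mult, !Cmod_R, !Rabs_pos_eq, Cmod_pow
    by (apply Rlt_le, coef_gt0 || apply pos_INR).
  fold r. pose proof (coef_gt0 k). pose proof (pos_INR (n k)).
  assert (0 <= coef k * INR (n k)) by nra. nra.
Qed.

Lemma Cmod_lac_deriv_tail_le n m (z : C) :
  1 <= INR (n (S m)) -> Cmod z = 1 - / (4 * INR (n (S m))) ->
  Cmod (lac_deriv coef n z - sum_n (lac_deriv_term coef n z) (S m))%C
  <= 16 / 45 * (coef (S m) * INR (n (S m))).
Proof.
  intros HN Hz. pose proof (one_sub_inv4_bounds _ HN) as Hr. rewrite <- Hz in Hr.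
  set (N := INR (n (S m))) in *. set (r := Cmod z) in *.
  assert (Hinv : / (r * (1 - r)) <= 16 * N / 3).
  { replace (16 * N / 3) with (/ (3 / 4 * (1 - r))) by (rewrite Hz; field; lra).
    apply Rinv_le_contravar; [apply Rmult_lt_0_compat; lra|].
    apply Rmult_le_compat_r; lra. }
  assert (Htail : is_series (fun i => lac_deriv_term coef n z (S (S m) + i))
                    (lac_deriv coef n z - sum_n (lac_deriv_term coef n z) (S m))%C).
  { apply (is_series_incr_n (V := C_NormedModule)); [lia|].
    simpl pred. match goal with |- is_series _ (plus _ ?y) =>
      replace (plus _ y) with (lac_deriv coef n z)
        by (change (lac_deriv coef n z = lac_deriv coef n z - y + y)%C; ring) end.
    apply is_series_lac_deriv; [intros k; apply Rlt_le, coef_gt0|exact coef_summable|fold r; lra]. }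
  assert (Hbound : is_series (fun i => coef (S (S m) + i) / (r * (1 - r)))
                     (coef (S (S m)) * (16 / 15) / (r * (1 - r)))).
  { apply is_series_scal_r, is_series_coef_shift. }
  eapply Rle_trans.
  { apply (Cmod_series_le _ _ _ _ Htail Hbound). intros i.
    apply Cmod_lac_deriv_term_le; [intros k; apply Rlt_le, coef_gt0|lra|fold r; lra]. }
  rewrite coef_S. pose proof (coef_gt0 (S m)).
  replace (coef (S m) / 16 * (16 / 15) / (r * (1 - r)))
    with (coef (S m) / 15 * / (r * (1 - r))) by (field; split; lra).
  apply Rle_trans with (coef (S m) / 15 * (16 * N / 3)); [apply Rmult_le_compat_l; lra|].
  right. field.
Qed.

Lemma Cmod_lac_deriv_ge n m (z : C) :
  1 <= INR (n (S m)) -> (forall j, (j <= m)%nat -> (n j <= n m)%nat) -> lacunary_gap n m ->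
  Cmod z = 1 - / (4 * INR (n (S m))) ->
  coef (S m) * INR (n (S m)) / 5 <= Cmod (lac_deriv coef n z).
Proof.
  intros HN Hmono Hgap Hz.
  assert (Hz1 : Cmod z <= 1) by (pose proof (one_sub_inv4_bounds _ HN); lra).
  set (L := lac_deriv coef n z). set (head := sum_n (lac_deriv_term coef n z) m).
  set (peak := lac_deriv_term coef n z (S m)).
  pose proof (Cmod_lac_deriv_head_le n m z Hz1 Hmono) as Hhead. fold head in Hhead.
  pose proof (Cmod_lac_deriv_peak_ge n (S m) z HN Hz) as Hpeak. fold peak in Hpeak.
  pose proof (Cmod_lac_deriv_tail_le n m z HN Hz) as Htail.
  rewrite sum_Sn in Htail. fold L head peak in Htail. change plus with Cplus in Htail.
  assert (Htri : Cmod peak <= Cmod L + Cmod head + Cmod (L - (head + peak))%C).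
  { replace peak with (L + - head + - (L - (head + peak)))%C at 1 by ring.
    eapply Rle_trans; [apply Cmod_triangle|]. rewrite Cmod_opp. apply Rplus_le_compat_r.
    eapply Rle_trans; [apply Cmod_triangle|]. rewrite Cmod_opp. lra. }
  (* 3/4 - 1/6 - 16/45 > 1/5 *)
  unfold lacunary_gap in Hgap. pose proof (coef_gt0 (S m)).
  assert (0 <= coef (S m) * INR (n (S m))) by (apply Rmult_le_pos; lra). lra.
Qed.

Lemma I_p_p_lac_ge n m :
  1 <= INR (n (S m)) -> (forall j, (j <= m)%nat -> (n j <= n m)%nat) -> lacunary_gap n m ->
  (coef (S m) * INR (n (S m))) ^ 2 / 14
  <= I_p (p_lac n) (lac_deriv coef n) (1 - / (4 * INR (n (S m)))).
Proof.
  intros HN Hmono Hgap.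
  pose proof (one_sub_inv4_bounds _ HN) as Hr.
  set (r := 1 - / (4 * INR (n (S m)))) in *. set (X := coef (S m) * INR (n (S m))).
  assert (HX : 0 <= X) by (apply Rmult_le_pos; [apply Rlt_le, coef_gt0|lra]).
  assert (Hdisc : forall t, Cmod (polar r t) < 1) by (intros t; rewrite Cmod_polar; lra).
  apply Rle_trans with (2 * PI * (X / 9) ^ 2).
  { pose proof PI2_3_2. pose proof (pow2_ge_0 X).
    assert (3 * X ^ 2 <= PI * X ^ 2) by (apply Rmult_le_compat_r; lra).
    replace (2 * PI * (X / 9) ^ 2) with (2 / 81 * (PI * X ^ 2)) by field. lra. }
  apply I_p_ge; [lra|lra| | | |].
  - intros t. apply p_lac_neq0, Rlt_le, Hdisc.
  - intros t. eapply C_is_derive_continuous, p_lac_is_derive, Hdisc.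
  - intros t. apply lac_deriv_continuous;
      [intros k; apply Rlt_le, coef_gt0|exact coef_summable|apply Hdisc].
  - intros t. set (z := polar r t).
    assert (Hdp : X / 5 <= Cmod (lac_deriv coef n z))
      by (apply Cmod_lac_deriv_ge; auto; unfold z; rewrite Cmod_polar by lra; reflexivity).
    assert (Hp : Cmod (p_lac n z) <= 19 / 15) by (apply Cmod_p_lac_le, Rlt_le, Hdisc).
    assert (Hp0 : 0 < Cmod (p_lac n z)) by (apply Cmod_gt_0, p_lac_neq0, Rlt_le, Hdisc).
    assert (X / 9 * Cmod (p_lac n z) <= X / 9 * (19 / 15)) by (apply Rmult_le_compat_l; lra).
    assert (3 / 4 * (X / 5) <= r * Cmod (lac_deriv coef n z)) by (apply Rmult_le_compat; lra).
    apply (Rle_div_r (X / 9)); lra.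
Qed.

Lemma I_p_p_lac_ge_mul n m (phi : R) :
  1 <= INR (n (S m)) -> (forall j, (j <= m)%nat -> (n j <= n m)%nat) -> lacunary_gap n m ->
  phi <= coef (S m) ^ 2 / (224 * (INR (S m) + 1)) / (1 - (1 - / (4 * INR (n (S m))))) ^ 2 ->
  phi * (INR (S m) + 1) <= I_p (p_lac n) (lac_deriv coef n) (1 - / (4 * INR (n (S m)))).
Proof.
  intros HN Hmono Hgap Hphi. pose proof (pos_INR (S m)).
  replace (coef (S m) ^ 2 / (224 * (INR (S m) + 1)) / (1 - (1 - / (4 * INR (n (S m))))) ^ 2)
    with ((coef (S m) * INR (n (S m))) ^ 2 / 14 / (INR (S m) + 1)) in Hphi by (field; lra).
  eapply Rle_trans; [|apply I_p_p_lac_ge; assumption].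
  apply Rle_div_r; lra.
Qed.

(** * Choice of the exponents *)

Lemma lacunary_gap_growth n m :
  lacunary_gap n m -> 24 * INR (S m) * INR (n m) <= INR (n (S m)).
Proof.
  unfold lacunary_gap. intros Hgap.
  pose proof (coef_le (S m)). pose proof (pos_INR (n (S m))).
  assert (coef (S m) * INR (n (S m)) <= / 4 * INR (n (S m))) by (apply Rmult_le_compat_r; lra).
  lra.
Qed.

Lemma lacunary_gap_le n m : lacunary_gap n m -> (n m <= n (S m))%nat.
Proof.
  intros Hgap. apply INR_le. pose proof (lacunary_gap_growth n m Hgap) as Hgrowth.
  pose proof (pos_INR (n m)). pose proof (pos_INR m). rewrite S_INR in Hgrowth. nra.
Qed.

Lemma lacunary_gap_lt n m :
  1 <= INR (n m) -> lacunary_gap n m -> INR (S m) < INR (n (S m)).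
Proof.
  intros Hnm Hgap. pose proof (lacunary_gap_growth n m Hgap).
  pose proof (pos_INR m). rewrite S_INR in *.
  assert (INR m + 1 <= (INR m + 1) * INR (n m)) by (apply Rle_trans with ((INR m + 1) * 1);
                                                    [lra|apply Rmult_le_compat_l; lra]).
  lra.
Qed.

Lemma lacunary_gap_monotone n :
  (forall m, lacunary_gap n m) -> forall j m, (j <= m)%nat -> (n j <= n m)%nat.
Proof.
  intros Hgap j m Hjm. induction Hjm as [|m _ IH]; [lia|].
  pose proof (lacunary_gap_le n m (Hgap m)). lia.
Qed.

Lemma exists_nat_seq_above (b : nat -> nat -> R) (n0 : nat) :
  exists n : nat -> nat, n 0%nat = n0 /\ forall m, b m (n m) < INR (n (S m)).
Proof.
  destruct (functional_choice (fun mk N => b (fst mk) (snd mk) < INR N)) as [next Hnext].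
  { intros [m k]. destruct (INR_archimed 1 (b m k)) as [N HN]; [lra|]. exists N. simpl. lra. }
  exists (fix n m := match m with O => n0 | S m' => next (m', n m') end).
  split; [reflexivity|]. intros m. exact (Hnext (m, _)).
Qed.

Lemma exists_lacunary_exponents (dl : nat -> R) :
  (forall k, 0 < dl k) ->
  exists n : nat -> nat, forall m,
    1 <= INR (n m) /\ lacunary_gap n m /\ / dl (S m) < INR (n (S m)).
Proof.
  intros Hdl.
  destruct (exists_nat_seq_above
              (fun m k => 6 * INR (S m) * INR k / coef (S m) + / dl (S m)) 1) as [n [Hn0 Hn]].
  assert (Hstep : forall m, 6 * INR (S m) * INR (n m) / coef (S m) < INR (n (S m))
                            /\ / dl (S m) < INR (n (S m))).
  { intros m. specialize (Hn m). pose proof (Rinv_0_lt_compat _ (Hdl (S m))).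
    assert (0 <= 6 * INR (S m) * INR (n m) / coef (S m)).
    { apply Rdiv_le_0_compat; [|apply coef_gt0].
      pose proof (pos_INR (S m)). pose proof (pos_INR (n m)). nra. }
    cbv beta in Hn. lra. }
  exists n. intros m. split; [|split].
  - destruct m as [|m]; [rewrite Hn0; simpl; lra|].
    destruct (Hstep m) as [_ Hlt]. pose proof (Rinv_0_lt_compat _ (Hdl (S m))).
    assert (0 < n (S m))%nat by (apply INR_lt; simpl; lra).
    apply (le_INR 1). lia.
  - pose proof (proj1 (Rlt_div_l _ _ _ (coef_gt0 (S m))) (proj1 (Hstep m))).
    unfold lacunary_gap. lra.
  - apply Hstep.
Qed.

Lemma one_sub_inv_lt (d N : R) : 0 < d -> / d < N -> 1 - d < 1 - / (4 * N).
Proof.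
  intros Hd HdN. assert (HN : 0 < N) by (pose proof (Rinv_0_lt_compat d Hd); lra).
  assert (/ (4 * N) < / N) by (apply Rinv_lt_contravar; nra).
  assert (/ N < d).
  { rewrite <- (Rinv_inv d). apply Rinv_lt_contravar; [|exact HdN].
    apply Rmult_lt_0_compat; [now apply Rinv_0_lt_compat|exact HN]. }
  lra.
Qed.

Theorem theorem1p3 (Phi : R -> R)
  (Phi_pos : forall r, 0 < r < 1 -> 0 < Phi r)
  (Phi_little_o : forall eps, 0 < eps ->
      exists delta, 0 < delta /\
        forall r, 1 - delta < r < 1 -> Phi r <= eps / (1 - r) ^ 2) :
  exists p dp : C -> C,
    in_class_P_with_deriv p dp /\
    (* limsup_{r -> 1^-} I_p(r) / Phi(r) = +oo *)
    (forall M delta, 0 < delta ->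
       exists r, 1 - delta < r < 1 /\ 0 < r /\ M < I_p p dp r / Phi r).
Proof.
  (* 224 = 14 * 16: at r = 1 - 1/(4N), I_p(r) >= (coef N)^2 / 14 and (1 - r)^(-2) = 16 N^2. *)
  set (eps := fun k => coef k ^ 2 / (224 * (INR k + 1))).
  destruct (functional_choice (fun k d =>
              0 < d /\ forall r, 1 - d < r < 1 -> Phi r <= eps k / (1 - r) ^ 2)) as [dl Hdl].
  { intros k. apply Phi_little_o. pose proof (coef_gt0 k). pose proof (pos_INR k).
    apply Rdiv_lt_0_compat; [apply pow_lt|]; lra. }
  destruct (exists_lacunary_exponents dl (fun k => proj1 (Hdl k))) as [n Hn].
  exists (p_lac n), (lac_deriv coef n). split; [apply p_lac_in_class_P|].
  intros M delta Hdelta.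
  destruct (INR_archimed 1 (Rmax M (/ delta))) as [m Hm]; [lra|].
  pose proof (Rmax_l M (/ delta)) as HmM. pose proof (Rmax_r M (/ delta)) as Hmdelta.
  destruct (Hn m) as [Hnm [Hgap HdlN]]. destruct (Hn (S m)) as [HN _].
  assert (Hmono : forall j, (j <= m)%nat -> (n j <= n m)%nat)
    by (intros j; apply lacunary_gap_monotone; intros k; apply Hn).
  pose proof (lacunary_gap_lt n m Hnm Hgap) as HmN. rewrite S_INR in HmN.
  pose proof (one_sub_inv4_bounds _ HN) as Hr34.
  set (r := 1 - / (4 * INR (n (S m)))) in *.
  assert (Hr : 0 < r < 1) by lra.
  exists r. split; [split; [apply one_sub_inv_lt; lra|apply Hr]|split; [apply Hr|]].
  pose proof (Phi_pos r Hr).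
  apply Rlt_div_r; [lra|].
  eapply Rlt_le_trans; [|apply (I_p_p_lac_ge_mul n m); auto].
  - rewrite Rmult_comm, S_INR. apply Rmult_lt_compat_l; lra.
  - apply (proj2 (Hdl (S m))). split; [apply one_sub_inv_lt; [apply Hdl|exact HdlN]|apply Hr].
Qed.
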